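(* Let $n\ge 2$. The graph $D_n$ is complete if and only if every prime $p\le \frac n2$ satisfies both $p\mid n$ and $p^{\acute v_p(n)}>\frac n2$.
   Context: $D_n$ is the graph with vertex set $\{1,\dots,n\}$ in which distinct $a,b$ are adjacent iff $\gcd(a,b)\mid n$ (the maximal Diophantine graph of order $n$). For a prime $p$, $\acute v_p(n):=v_p(n)+1$, where $v_p(n)$ is the exponent of $p$ in $n$. *)

From mathcomp Require Import all_boot.
Set Implicit Arguments. Unset Strict Implicit. Unset Printing Implicit Defensive.

(* Maximal Diophantine graph D_n: vertex set {1,...,n}; distinct a, b adjacent
   iff gcd(a,b) divides n. *)
Definition Dn_adj (n a b : nat) : bool := (a != b) && (gcdn a b %| n).

Definition Dn_complete (n : nat) : Prop :=
  forall a b : nat, 1 <= a <= n -> 1 <= b <= n -> a != b -> Dn_adj n a b.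

Definition vacute (p n : nat) : nat := (logn p n).+1.

From mathcomp Require Import all_boot.
From mathcomp Require Import zify.

(* Taking the edge {k, 2k}, completeness of D_n forces k | n for every
   k <= n/2.  Conversely this suffices: for vertices a < b the gcd d divides
   both a and b - a, so 2d <= b <= n.  By factorization, "every k <= n/2
   divides n" amounts to: no prime power p^e <= n/2 has e > v_p(n); the
   smallest candidate is p^(v_p(n)+1), and it may be ignored exactly when
   p > n/2 or p^(v_p(n)+1) > n/2 (which, for p <= n/2, also gives p | n). *)

Lemma Dn_adjC n a b : Dn_adj n a b = Dn_adj n b a.
Proof. by rewrite /Dn_adj eq_sym gcdnC. Qed.

Lemma double_gcdn_leq a b : 0 < a < b -> 2 * gcdn a b <= b.
Proof.
case/andP=> a_gt0 lt_ab.
have le_da : gcdn a b <= a by rewrite dvdn_leq ?dvdn_gcdl.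
have le_dba : gcdn a b <= b - a.
  by rewrite dvdn_leq ?subn_gt0 // dvdn_sub ?dvdn_gcdr ?dvdn_gcdl.
lia.
Qed.

Lemma Dn_completeP n :
  Dn_complete n <-> (forall k, 0 < k -> 2 * k <= n -> k %| n).
Proof.
split=> [Dn k k_gt0 le_2k_n | dvd_n].
  have /andP[_] := Dn k (2 * k) ltac:(lia) ltac:(lia) ltac:(lia).
  by rewrite gcdnMl.
have adj_lt a b : 1 <= a -> b <= n -> a < b -> Dn_adj n a b.
  move=> a_gt0 le_bn lt_ab; rewrite /Dn_adj neq_ltn lt_ab /=.
  by apply: dvd_n; rewrite ?gcdn_gt0 ?a_gt0 //; have := @double_gcdn_leq a b; lia.
move=> a b /andP[a_gt0 le_an] /andP[b_gt0 le_bn]; rewrite neq_ltn.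
by case/orP=> [lt_ab | lt_ba]; [|rewrite Dn_adjC]; apply: adj_lt.
Qed.

Lemma logn_leq_dvdn m n : 0 < m -> 0 < n ->
  (forall p, prime p -> p %| m -> logn p m <= logn p n) -> m %| n.
Proof.
move=> m_gt0 n_gt0 le_logn; apply/(dvdn_partP _ m_gt0) => p.
rewrite mem_primes => /and3P[p_pr _ p_dvd_m].
by rewrite p_part pfactor_dvdn // le_logn.
Qed.

Lemma small_divisorsP n : 0 < n ->
  (forall k, 0 < k -> 2 * k <= n -> k %| n) <->
  (forall p, prime p -> 2 * p <= n -> p %| n /\ n < 2 * p ^ (logn p n).+1).
Proof.
move=> n_gt0; split=> [dvd_n p p_pr le_2p_n | prime_cond k k_gt0 le_2k_n].
  have p_gt0 := prime_gt0 p_pr.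
  split; first exact: dvd_n.
  rewrite ltnNge; apply/negP => /dvd_n.
  by rewrite expn_gt0 p_gt0 pfactor_dvdn // ltnn => /(_ isT).
apply: logn_leq_dvdn => // p p_pr p_dvd_k.
have le_pk : p ^ logn p k <= k by rewrite dvdn_leq ?pfactor_dvdnn.
have [_ lt_n] := prime_cond p p_pr ltac:(have := dvdn_leq k_gt0 p_dvd_k; lia).
by rewrite -ltnS -(ltn_exp2l _ _ (prime_gt1 p_pr)); lia.
Qed.

Theorem mainTheorem10 (n : nat) (hn : 2 <= n) :
  Dn_complete n <->
  (forall p : nat, prime p -> 2 * p <= n ->
     p %| n /\ n < 2 * p ^ vacute p n).
Proof. by rewrite Dn_completeP; apply: small_divisorsP; lia. Qed.
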